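(* Let $q$ be a prime power and $T\in\mathbb F_q[X,Y,Z]$ a reduced polynomial satisfying Property (e): for all $a,b,c,d\in\mathbb F_q$ with $a\neq c$ there is a unique pair $(y,z)\in\mathbb F_q^2$ with $T(a,y,z)=b$ and $T(c,y,z)=d$. Let $\{1,\beta\}$ be a basis of $\mathbb F_{q^2}$ over $\mathbb F_q$, and for $a,b\in\mathbb F_q$ let $S_{a,b}\in\mathbb F_{q^2}[X]$ be the polynomial of least degree inducing the map $\mathbb F_{q^2}\to\mathbb F_{q^2}$, $y+\beta z\mapsto T(a,y,z)+\beta T(b,y,z)$ ($y,z\in\mathbb F_q$). Then $S_{a,b}$ is a permutation polynomial over $\mathbb F_{q^2}$ whenever $a\neq b$.
   Context: A polynomial is reduced if its degree in each variable is less than $q$. A permutation polynomial over $\mathbb F_{q^2}$ is one inducing a bijection of $\mathbb F_{q^2}$. *)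

From HB Require Import structures.
From mathcomp Require Import all_boot all_algebra all_field.
From mathcomp Require Import mpoly.
Set Implicit Arguments. Unset Strict Implicit. Unset Printing Implicit Defensive.
Import GRing.Theory.
Local Open Scope ring_scope.

Definition ev3 (F : ringType) (T : {mpoly F[3]}) (a y z : F) : F :=
  T.@[fun i : 'I_3 => match val i with 0 => a | 1 => y | _ => z end].

Definition reduced_mpoly (F : ringType) (q : nat) (T : {mpoly F[3]}) : Prop :=
  forall m, m \in msupp T -> forall i : 'I_3, (m i < q)%N.

Definition property_e (F : ringType) (T : {mpoly F[3]}) : Prop :=
  forall a b c d : F, a != c ->
    exists! yz : F * F, ev3 T a yz.1 yz.2 = b /\ ev3 T c yz.1 yz.2 = d.

Definition induces_Sab (F : fieldType) (L : fieldExtType F) (beta : L)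
    (T : {mpoly F[3]}) (a b : F) (S : {poly L}) : Prop :=
  forall y z : F, S.[y%:A + z *: beta] = (ev3 T a y z)%:A + (ev3 T b y z)%:A * beta.

Definition is_Sab (F : fieldType) (L : fieldExtType F) (beta : L)
    (T : {mpoly F[3]}) (a b : F) (S : {poly L}) : Prop :=
  induces_Sab beta T a b S /\
  forall S' : {poly L}, induces_Sab beta T a b S' -> (size S <= size S')%N.

Definition perm_poly (L : fieldType) (S : {poly L}) : Prop :=
  bijective (fun x : L => S.[x]).

(* Write L = F + F beta.  In these coordinates any polynomial inducing
   y + beta z |-> T(a,y,z) + beta T(b,y,z) acts as (y, z) |-> (T(a,y,z), T(b,y,z)),
   which Property (e) makes injective, hence bijective on the finite set F^2. *)

From HB Require Import structures.
From mathcomp Require Import all_boot all_algebra all_field.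
From mathcomp Require Import mpoly.
Set Implicit Arguments. Unset Strict Implicit. Unset Printing Implicit Defensive.
Import GRing.Theory.
Local Open Scope ring_scope.

Section Coordinates.
Variables (F : fieldType) (L : fieldExtType F) (beta : L).

Definition of_coords (yz : F * F) : L := yz.1%:A + yz.2 *: beta.

Hypothesis basis_1beta : basis_of fullv [:: 1; beta].

Let X : 2.-tuple L := [tuple 1; beta].

Definition to_coords (x : L) : F * F := (coord X ord0 x, coord X ord_max x).

Lemma of_coordsK : cancel of_coords to_coords.
Proof.
have freeX : free X := basis_free basis_1beta.
have coordE i y z : coord X i (of_coords (y, z)) = y * coord X i 1 + z * coord X i beta.
  by rewrite linearD !linearZ.
have coord1 j : coord X j 1 = (ord0 == j)%:R := coord_free ord0 j freeX.
have coord_beta j : coord X j beta = (ord_max == j)%:R := coord_free ord_max j freeX.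
case=> y z; rewrite /to_coords !coordE !coord1 !coord_beta /=.
by rewrite !(mulr1, mulr0, addr0, add0r).
Qed.

Lemma to_coordsK : cancel to_coords of_coords.
Proof.
move=> x; have x_span : x \in <<X>>%VS by rewrite (span_basis basis_1beta) memvf.
have lift0E : lift ord0 ord0 = ord_max :> 'I_2 by apply: val_inj.
by rewrite [RHS](coord_span x_span) big_ord_recl big_ord1 lift0E.
Qed.

Lemma of_coords_bij : bijective of_coords.
Proof. exact: Bijective of_coordsK to_coordsK. Qed.

End Coordinates.

Definition ev3_pair (F : ringType) (T : {mpoly F[3]}) (a c : F) (yz : F * F) : F * F :=
  (ev3 T a yz.1 yz.2, ev3 T c yz.1 yz.2).

Lemma property_e_inj (F : ringType) (T : {mpoly F[3]}) (a c : F) :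
  property_e T -> a != c -> injective (ev3_pair T a c).
Proof.
move=> propT ac [y1 z1] [y2 z2] [e1 e2].
have [yz [_ uniq_yz]] := propT a (ev3 T a y1 z1) c (ev3 T c y1 z1) ac.
rewrite -(uniq_yz (y1, z1)) //.
by apply: uniq_yz; rewrite /= -e1 -e2.
Qed.

Lemma induces_Sab_coords (F : fieldType) (L : fieldExtType F) (beta : L)
    (T : {mpoly F[3]}) (a b : F) (S : {poly L}) :
  induces_Sab beta T a b S ->
  forall yz, S.[of_coords beta yz] = of_coords beta (ev3_pair T a b yz).
Proof. by move=> hS [y z]; rewrite hS mulr_algl. Qed.

Theorem lemma4p6 (q : nat) (F : finFieldType) (L : fieldExtType F)
    (T : {mpoly F[3]}) (beta : L) :
  #|F| = q ->
  \dim {:L} = 2%N ->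
  basis_of fullv [:: 1; beta] ->
  reduced_mpoly q T ->
  property_e T ->
  forall (a b : F) (S : {poly L}),
    a != b -> is_Sab beta T a b S -> perm_poly S.
Proof.
move=> _ _ basis_1beta _ propT a b S ab [hS _].
have coords_bij := of_coords_bij basis_1beta.
have ev_bij := injF_bij (property_e_inj propT ab).
have to_coords_bij := bij_can_bij coords_bij (of_coordsK basis_1beta).
apply: (eq_bij (bij_comp (bij_comp coords_bij ev_bij) to_coords_bij)) => x /=.
by rewrite -{2}(to_coordsK basis_1beta x) (induces_Sab_coords hS).
Qed.
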